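(* Fix $p\in T^*\mathcal{Y}\setminus 0$. Let $\Sigma_p$ be the set of covectors $q\in T^*\mathcal{X}\setminus 0$ such that $(p,q)$ lies in the degenerate set $\Sigma$ of $\Lambda'$, and let $M_p=\{q\in T^*\mathcal{X}\setminus0: (p,q)\in\Lambda'\}$ be the set of mirror points associated to $p$. Then $M_p\setminus\Sigma_p$ consists of isolated covectors.
   Context: Setting (synthetic aperture radar model). $\gamma$ is a smooth embedded unit-speed curve in $\mathbb{R}^3$ (parameter $s$), $\Psi\subset\mathbb{R}^3$ a smooth embedded surface locally parametrized by $\psi(u,v)$, with $\mathrm{dist}(\Psi,\gamma)>0$; $c_0>0$ constant; $\mathcal{Y}=(s_1,s_2)\times(t_1,t_2)$, $\mathcal{X}=\{(u,v):\exists s\in(s_1,s_2),\ \tfrac{2}{c_0}|\psi(u,v)-\gamma(s)|\in(t_1,t_2)\}$. $R(u,v,s)=\psi(u,v)-\gamma(s)$, $\hat R=R/|R|$, and $\pi_{T\Psi}\hat R(u,v,s)$ is the projection of $\hat R$ onto the tangent plane of $\Psi$ at $\psi(u,v)$, written in components with respect to the coordinates $(u,v)$. Coordinates $(s,t,\sigma,\tau)$ on $T^*\mathcal{Y}$, $(u,v,\xi,\eta)$ on $T^*\mathcal{X}$. The canonical relation of the SAR forward operator is \[ \Lambda'=\Big\{(s,t,\sigma,\tau;u,v,\xi,\eta): t=\tfrac{2}{c_0}|R(u,v,s)|,\ \sigma=\tfrac{2\tau}{c_0}\hat R(u,v,s)\cdot\dot\gamma(s),\ (\xi,\eta)=\tfrac{2\tau}{c_0}\pi_{T\Psi}\hat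 R(u,v,s)\Big\}. \] Its degenerate set is $\Sigma=\Sigma_1\cup\Sigma_2$ with $\Sigma_1=\{\pi_{T\Psi}\hat R\parallel\nabla_{u,v}(\hat R\cdot\dot\gamma(s))\}\cap\Lambda'$ and $\Sigma_2=\{\pi_{T\Psi}\hat R\parallel\partial_s\pi_{T\Psi}\hat R\}\cap\Lambda'$; away from $\Sigma$, $\Lambda'$ is locally the graph of a diffeomorphism. *)

From HB Require Import structures.
From mathcomp Require Import all_boot all_order all_algebra.
From mathcomp Require Import all_classical all_reals all_analysis.
Set Implicit Arguments. Unset Strict Implicit. Unset Printing Implicit Defensive.
Import Order.TTheory GRing.Theory Num.Theory.
Import numFieldNormedType.Exports.
Local Open Scope classical_set_scope.
Local Open Scope ring_scope.

Section SAR.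
Variable R : realType.

(** Euclidean inner product and Euclidean norm on row vectors
    (the library norm on 'rV is the max norm, so we define these). *)
Definition dotv (n : nat) (x y : 'rV[R]_n) : R := \sum_(i < n) x 0 i * y 0 i.
Definition enorm (n : nat) (x : 'rV[R]_n) : R := Num.sqrt (dotv x x).

(** Coordinate unit vectors of R^2 : e_u = e 0, e_v = e 1. *)
Definition e2 (j : 'I_2) : 'rV[R]_2 := delta_mx 0 j.

Fixpoint CkOn (V W : normedModType R) (A : set V) (k : nat) (f : V -> W) : Prop :=
  match k with
  | 0 => forall x, A x -> f @ x --> f x
  | k'.+1 => (forall x, A x -> differentiable f x) /\
             (forall v : V, CkOn A k' ('D_v f))
  end.

Definition smooth_on (V W : normedModType R) (A : set V) (f : V -> W) : Prop :=
  forall k, CkOn A k f.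

Definition parallel2 (a b : 'rV[R]_2) : Prop := a 0 0 * b 0 1 - a 0 1 * b 0 0 = 0.

Variables (psi : 'rV[R]_2 -> 'rV[R]_3) (gam : R -> 'rV[R]_3).

Definition Rv (x : 'rV[R]_2) (s : R) : 'rV[R]_3 := psi x - gam s.
Definition Rhat (x : 'rV[R]_2) (s : R) : 'rV[R]_3 := (enorm (Rv x s))^-1 *: Rv x s.

(** pi_{T Psi} \hat R in components w.r.t. the coordinates (u,v)
    (covector components: (\hat R . psi_u, \hat R . psi_v)). *)
Definition piTR (x : 'rV[R]_2) (s : R) : 'rV[R]_2 :=
  \row_(j < 2) dotv (Rhat x s) ('D_(e2 j) psi x).

Definition gradRg (x : 'rV[R]_2) (s : R) : 'rV[R]_2 :=
  \row_(j < 2) 'D_(e2 j) (fun y => dotv (Rhat y s) (derive1 gam s)) x.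

Definition dspiTR (x : 'rV[R]_2) (s : R) : 'rV[R]_2 := derive1 (fun s0 => piTR x s0) s.

Variables (U : set 'rV[R]_2) (c0 s1 s2 t1 t2 : R).

Definition inY (s t : R) : Prop := s1 < s <  s2 /\ t1 < t < t2.
Definition inX (x : 'rV[R]_2) : Prop :=
  U x /\ exists s, s1 < s < s2 /\ t1 < 2 / c0 * enorm (Rv x s) < t2.

(** T^*Y \ 0 and T^*X \ 0, with covectors p = (s,t,sigma,tau), q = (x,k),
    x = (u,v), k = (xi,eta). *)
Definition TY0 (s t sig tau : R) : Prop := inY s t /\ (sig, tau) <> (0, 0).
Definition TX0 (x k : 'rV[R]_2) : Prop := inX x /\ k <> 0.

Definition Lambda' (s t sig tau : R) (x k : 'rV[R]_2) : Prop :=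
  [/\ inY s t, inX x,
      t = 2 / c0 * enorm (Rv x s),
      sig = 2 * tau / c0 * dotv (Rhat x s) (derive1 gam s) &
      k = (2 * tau / c0) *: piTR x s].

Definition Sigma1 (s t sig tau : R) (x k : 'rV[R]_2) : Prop :=
  Lambda' s t sig tau x k /\ parallel2 (piTR x s) (gradRg x s).
Definition Sigma2 (s t sig tau : R) (x k : 'rV[R]_2) : Prop :=
  Lambda' s t sig tau x k /\ parallel2 (piTR x s) (dspiTR x s).
Definition Sigma (s t sig tau : R) (x k : 'rV[R]_2) : Prop :=
  Sigma1 s t sig tau x k \/ Sigma2 s t sig tau x k.

Definition Sigma_p (s t sig tau : R) (x k : 'rV[R]_2) : Prop :=
  TX0 x k /\ Sigma s t sig tau x k.
Definition Mirror_p (s t sig tau : R) (x k : 'rV[R]_2) : Prop :=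
  TX0 x k /\ Lambda' s t sig tau x k.

End SAR.

From HB Require Import structures.
From mathcomp Require Import all_boot all_order all_algebra.
From mathcomp Require Import all_classical all_reals all_analysis.
From mathcomp Require Import ring lra.
Set Implicit Arguments. Unset Strict Implicit. Unset Printing Implicit Defensive.
Import Order.TTheory GRing.Theory Num.Theory.
Import numFieldNormedType.Exports.
Local Open Scope classical_set_scope.
Local Open Scope ring_scope.

(** The mirror condition fixes [s], hence it fixes both the range
    [|R(x, s)|^2] and the Doppler term [\hat R(x, s) . gamma'(s)] as functions
    of the surface point [x] alone.  The Jacobian of this pair of functions of
    [x] is, up to the nonzero factor [2 |R|], the matrix with rows
    [pi_{T Psi} \hat R] and [\nabla (\hat R . gamma')], which is invertible
    exactly off [Sigma_1].  A map from the plane to the plane with invertible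
    differential is injective near the point, so a non-degenerate mirror point
    is isolated in its level set; the covector [k] is then determined by [x]. *)

Section PlaneLinearMaps.
Variable R : realType.

Definition jac_det (L1 L2 : 'rV[R]_2 -> R) : R :=
  L1 (e2 R 0) * L2 (e2 R 1) - L1 (e2 R 1) * L2 (e2 R 0).

Definition jac_bound (L1 L2 : 'rV[R]_2 -> R) : R :=
  `|L1 (e2 R 0)| + `|L1 (e2 R 1)| + `|L2 (e2 R 0)| + `|L2 (e2 R 1)|.

Lemma jac_bound_ge0 (L1 L2 : 'rV[R]_2 -> R) : 0 <= jac_bound L1 L2.
Proof. by rewrite /jac_bound !addr_ge0. Qed.

Lemma rV2_decomp (h : 'rV[R]_2) : h = h 0 0 *: e2 R 0 + h 0 1 *: e2 R 1.
Proof.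
apply/rowP => j; rewrite !mxE /=.
case: j => [[|[|n]] Hn] /=; rewrite ?mulr1 ?mulr0 ?addr0 ?add0r //;
  by congr (h _ _); apply/val_inj.
Qed.

Lemma linear_rV2 (L : {linear 'rV[R]_2 -> R}) (h : 'rV[R]_2) :
  L h = h 0 0 * L (e2 R 0) + h 0 1 * L (e2 R 1).
Proof. by rewrite {1}(rV2_decomp h) linearD !linearZ. Qed.

Lemma rV2_norm_le (h : 'rV[R]_2) (c : R) :
  `|h 0 0| <= c -> `|h 0 1| <= c -> `|h| <= c.
Proof.
move=> h0 h1; rewrite [leLHS]/Num.Def.normr /= mx_normrE.
apply: bigmax_le; first exact: le_trans (normr_ge0 _) h0.
move=> [i j] _ /=; rewrite (ord1 i).
case: j => [[|[|n]] Hn] //=.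
  by rewrite (_ : Ordinal _ = 0) //; apply/val_inj.
by rewrite (_ : Ordinal _ = 1) //; apply/val_inj.
Qed.

(* Cramer's rule, read as a quantitative inverse bound. *)
Lemma jac_det_norm_le (L1 L2 : {linear 'rV[R]_2 -> R}) (h : 'rV[R]_2) :
  `|jac_det L1 L2| * `|h| <= jac_bound L1 L2 * (`|L1 h| + `|L2 h|).
Proof.
set B := jac_bound L1 L2.
have n1 := normr_ge0 (L1 (e2 R 0)); have n2 := normr_ge0 (L1 (e2 R 1)).
have n3 := normr_ge0 (L2 (e2 R 0)); have n4 := normr_ge0 (L2 (e2 R 1)).
have a_le : `|L1 (e2 R 0)| <= B by rewrite /B /jac_bound; lra.
have b_le : `|L1 (e2 R 1)| <= B by rewrite /B /jac_bound; lra.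
have c_le : `|L2 (e2 R 0)| <= B by rewrite /B /jac_bound; lra.
have d_le : `|L2 (e2 R 1)| <= B by rewrite /B /jac_bound; lra.
have comb_le (y z p q : R) : `|y| <= B -> `|z| <= B ->
    `|y * p - z * q| <= B * (`|p| + `|q|).
  move=> hy hz; apply: le_trans (ler_normB _ _) _.
  by rewrite !normrM mulrDr lerD // ler_wpM2r.
rewrite -normrZ; apply: rV2_norm_le; rewrite !mxE.
- have -> : jac_det L1 L2 * h 0 0 =
      L2 (e2 R 1) * L1 h - L1 (e2 R 1) * L2 h.
    by rewrite (linear_rV2 L1 h) (linear_rV2 L2 h) /jac_det; ring.
  exact: comb_le.
- have -> : jac_det L1 L2 * h 0 1 =
      L1 (e2 R 0) * L2 h - L2 (e2 R 0) * L1 h.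
    by rewrite (linear_rV2 L1 h) (linear_rV2 L2 h) /jac_det; ring.
  by rewrite [`|L1 h| + _]addrC; apply: comb_le.
Qed.

End PlaneLinearMaps.

Lemma differential_small (R : realType) (V : normedModType R) (f : V -> R) x :
  differentiable f x -> forall eps : R, 0 < eps ->
  \forall h \near 0, `|f (h + x) - f x - 'd f x h| <= eps * `|h|.
Proof.
move=> /diff_locally /eqaddoP df eps eps_gt0.
by apply: filterS (df eps eps_gt0) => h /=; rewrite opprD addrA.
Qed.

(* The differential is coercive ([jac_det_norm_le]) while the remainder is
   [o(|x' - x|)], so the remainder cannot cancel the differential. *)
Lemma isolated_in_level_set (R : realType) (f1 f2 : 'rV[R]_2 -> R) x :
  differentiable f1 x -> differentiable f2 x ->
  jac_det ('d f1 x) ('d f2 x) != 0 ->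
  exists2 e : R, 0 < e & forall x', `|x' - x| < e ->
    f1 x' = f1 x -> f2 x' = f2 x -> x' = x.
Proof.
move=> df1 df2 det_neq0.
set D := `|jac_det ('d f1 x) ('d f2 x)|; set B := jac_bound ('d f1 x) ('d f2 x).
have D_gt0 : 0 < D by rewrite normr_gt0.
have B_ge0 : 0 <= B := jac_bound_ge0 _ _.
pose eps := D / (2 * (B + 1)).
have eps_gt0 : 0 < eps by rewrite divr_gt0 // mulr_gt0 // ltr_wpDl.
have small_eps : B * (2 * eps) < D.
  rewrite /eps mulrA mulrA ltr_pdivrMr ?mulr_gt0 ?ltr_wpDl //; nra.
have [e e_gt0 near_x] := iffLR nbhs_norm0P
  (filterI (differential_small df1 eps_gt0) (differential_small df2 eps_gt0)).
exists e => // x' x'_near f1_eq f2_eq.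
have [] := near_x (x' - x) x'_near.
rewrite subrK f1_eq f2_eq subrr sub0r normrN subrr sub0r normrN => d1_le d2_le.
have D_le : D * `|x' - x| <= B * (2 * eps) * `|x' - x|.
  apply: le_trans (jac_det_norm_le ('d f1 x) ('d f2 x) (x' - x)) _.
  rewrite -mulrA ler_wpM2l // -mulrA mulr_natl mulr2n.
  exact: (lerD d1_le d2_le).
apply/eqP; rewrite -subr_eq0 -normr_eq0 eq_le normr_ge0 andbT.
rewrite leNgt; apply/negP => h_gt0.
by move: D_le; rewrite ler_pM2r // leNgt small_eps.
Qed.

Section DotProduct.
Variables (R : realType) (V : normedModType R) (n : nat).
Implicit Types (P Q : V -> 'rV[R]_n) (u w : 'rV[R]_n).

Lemma dotvC u w : dotv u w = dotv w u.
Proof. by rewrite /dotv; apply: eq_bigr => i _; rewrite mulrC. Qed.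

Lemma dotvZl (a : R) u w : dotv (a *: u) w = a * dotv u w.
Proof. by rewrite /dotv mulr_sumr; apply: eq_bigr => i _; rewrite mxE mulrA. Qed.

Lemma dotv_enorm u : dotv u u = enorm u ^+ 2.
Proof.
by rewrite /enorm sqr_sqrtr // sumr_ge0 // => i _; rewrite -expr2 sqr_ge0.
Qed.

Lemma differentiable_entry P x i : differentiable P x ->
  differentiable (fun y => P y 0 i) x.
Proof.
move=> dP; have -> : (fun y => P y 0 i) = (fun N : 'rV[R]_n => N 0 i) \o P by [].
exact/differentiable_comp/differentiable_coord.
Qed.

Lemma derive_entry P x v i : differentiable P x ->
  'D_v (fun y => P y 0 i) x = 'D_v P x 0 i.
Proof. by move=> dP; rewrite (derive_mx (diff_derivable (v:=v) dP)) mxE. Qed.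

Let dotv_sum P Q :
  (fun y => dotv (P y) (Q y)) = \sum_(i < n) ((fun y => P y 0 i) * (fun y => Q y 0 i)).
Proof. by apply/funext => y; rewrite /dotv fct_sumE. Qed.

Lemma differentiable_dotv P Q x : differentiable P x -> differentiable Q x ->
  differentiable (fun y => dotv (P y) (Q y)) x.
Proof.
move=> dP dQ; rewrite dotv_sum; apply: differentiable_sum => i.
by apply: differentiableM; apply: differentiable_entry.
Qed.

Lemma derive_dotv P Q x v : differentiable P x -> differentiable Q x ->
  'D_v (fun y => dotv (P y) (Q y)) x = dotv ('D_v P x) (Q x) + dotv (P x) ('D_v Q x).
Proof.
move=> dP dQ; rewrite dotv_sum derive_sum; last first.
  by move=> i; apply/diff_derivable/differentiableM; apply: differentiable_entry.
rewrite /dotv -big_split /=; apply: eq_bigr => i _.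
have dPi := diff_derivable (v:=v) (differentiable_entry i dP).
have dQi := diff_derivable (v:=v) (differentiable_entry i dQ).
rewrite (deriveM dPi dQi) !derive_entry // /GRing.scale /=.
by rewrite addrC mulrC [_ * Q x 0 i]mulrC.
Qed.

End DotProduct.

Section RangeDoppler.
Variables (R : realType) (psi : 'rV[R]_2 -> 'rV[R]_3) (gam : R -> 'rV[R]_3).
Variables (s : R) (x : 'rV[R]_2).
Hypothesis dpsi : differentiable psi x.

Definition range_sq (y : 'rV[R]_2) : R := dotv (Rv psi gam y s) (Rv psi gam y s).
Definition doppler (y : 'rV[R]_2) : R := dotv (Rhat psi gam y s) (derive1 gam s).

Let Rv_sub : (fun y => Rv psi gam y s) = psi - cst (gam s).
Proof. by []. Qed.

Lemma differentiable_Rv : differentiable (fun y => Rv psi gam y s) x.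
Proof. by rewrite Rv_sub; apply: differentiableB. Qed.

Lemma derive_Rv v : 'D_v (fun y => Rv psi gam y s) x = 'D_v psi x.
Proof.
rewrite Rv_sub (deriveB (diff_derivable (v:=v) dpsi) (derivable_cst (gam s) x v)).
by rewrite derive_cst subr0.
Qed.

Lemma differentiable_range_sq : differentiable range_sq x.
Proof. by apply: differentiable_dotv; apply: differentiable_Rv. Qed.

Hypothesis Rv_gt0 : 0 < enorm (Rv psi gam x s).

Lemma differentiable_doppler : differentiable doppler x.
Proof.
have -> : doppler = (fun y => (Num.sqrt (range_sq y))^-1) *
    (fun y => dotv (Rv psi gam y s) (derive1 gam s)).
  by apply/funext => y; rewrite /doppler /Rhat dotvZl.
apply: differentiableM; last first.
  by apply: differentiable_dotv; [exact: differentiable_Rv | exact: differentiable_cst].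
apply: differentiableV; last by rewrite gt_eqF.
apply: (differentiable_comp differentiable_range_sq).
apply/derivable1_diffP.
have range_sq_gt0 : 0 < range_sq x by rewrite /range_sq dotv_enorm exprn_gt0.
by case: (is_derive1_sqrt range_sq_gt0).
Qed.

Lemma diff_range_sq_e2 j :
  'd range_sq x (e2 R j) = 2 * enorm (Rv psi gam x s) * piTR psi gam x s 0 j.
Proof.
rewrite -deriveE; last exact: differentiable_range_sq.
rewrite /range_sq derive_dotv; [|exact: differentiable_Rv..].
rewrite derive_Rv dotvC mxE /Rhat dotvZl -mulrA mulVKf ?gt_eqF //.
by rewrite mulr_natl mulr2n.
Qed.

Lemma diff_doppler_e2 j : 'd doppler x (e2 R j) = gradRg psi gam x s 0 j.
Proof. by rewrite -deriveE ?mxE //; apply: differentiable_doppler. Qed.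

Lemma jac_det_range_doppler_neq0 :
  ~ parallel2 (piTR psi gam x s) (gradRg psi gam x s) ->
  jac_det ('d range_sq x) ('d doppler x) != 0.
Proof.
move=> not_par; rewrite /jac_det !diff_range_sq_e2 !diff_doppler_e2.
apply/eqP => det0; apply: not_par; rewrite /parallel2.
have : 2 * enorm (Rv psi gam x s) * (piTR psi gam x s 0 0 * gradRg psi gam x s 0 1
    - piTR psi gam x s 0 1 * gradRg psi gam x s 0 0) = 0 by rewrite -det0; ring.
by move/eqP; rewrite !mulf_eq0 pnatr_eq0 (gt_eqF Rv_gt0) /= => /eqP.
Qed.

End RangeDoppler.

Section MirrorPoints.
Variables (R : realType) (psi : 'rV[R]_2 -> 'rV[R]_3) (gam : R -> 'rV[R]_3).
Variables (U : set 'rV[R]_2) (c0 s1 s2 t1 t2 s t sig tau : R).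
Let Lam := Lambda' psi gam U c0 s1 s2 t1 t2 s t sig tau.

Lemma Lambda'_tau_neq0 x k : Lam x k -> k <> 0 -> tau != 0.
Proof.
case=> _ _ _ _ ->; apply: contra_not_neq => ->.
by rewrite mulr0 !mul0r scale0r.
Qed.

Lemma Lambda'_covector_unique x k k' : Lam x k -> Lam x k' -> k' = k.
Proof. by case=> _ _ _ _ -> [_ _ _ _ ->]. Qed.

Lemma Lambda'_level_set x k x' k' : c0 != 0 -> tau != 0 -> Lam x k -> Lam x' k' ->
  range_sq psi gam s x' = range_sq psi gam s x /\
  doppler psi gam s x' = doppler psi gam s x.
Proof.
move=> c0_neq0 tau_neq0 [_ _ t_eq sig_eq _] [_ _ t_eq' sig_eq' _].
have two_c0_neq0 : 2 / c0 != 0 by rewrite mulf_neq0 ?invr_eq0 ?pnatr_eq0.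
have tau_c0_neq0 : 2 * tau / c0 != 0.
  by rewrite !mulf_neq0 ?invr_eq0 ?pnatr_eq0.
split; last by apply: (mulfI tau_c0_neq0); rewrite -sig_eq -sig_eq'.
rewrite /range_sq !dotv_enorm; congr (_ ^+ 2).
by apply: (mulfI two_c0_neq0); rewrite -t_eq -t_eq'.
Qed.

End MirrorPoints.

Theorem proposition3 (R : realType)
    (psi : 'rV[R]_2 -> 'rV[R]_3) (gam : R -> 'rV[R]_3)
    (U : set 'rV[R]_2) (c0 s1 s2 t1 t2 : R)
    (hgam_smooth : smooth_on [set s | s1 < s < s2] gam)
    (hgam_unit : forall s, s1 < s < s2 -> enorm (derive1 gam s) = 1)
    (hgam_inj : forall s s', s1 < s < s2 -> s1 < s' < s2 -> gam s = gam s' -> s = s')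
    (hgam_emb : forall s0, s1 < s0 < s2 -> forall e, 0 < e -> exists2 d, 0 < d &
        forall s, s1 < s < s2 -> `|gam s - gam s0| < d -> `|s - s0| < e)
    (hU : open U)
    (hpsi_smooth : smooth_on U psi)
    (hpsi_imm : forall x, U x -> forall a b : R,
        a *: 'D_(e2 R 0) psi x + b *: 'D_(e2 R 1) psi x = 0 -> a = 0 /\ b = 0)
    (hpsi_inj : forall x y, U x -> U y -> psi x = psi y -> x = y)
    (hpsi_emb : forall x0, U x0 -> forall e, 0 < e -> exists2 d, 0 < d &
        forall x, U x -> `|psi x - psi x0| < d -> `|x - x0| < e)
    (hdist : exists2 d, 0 < d & forall x s, U x -> s1 < s < s2 ->
        d <= enorm (psi x - gam s))
    (hc0 : 0 < c0) :
  forall s t sig tau : R, TY0 s1 s2 t1 t2 s t sig tau ->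
  forall x k : 'rV[R]_2,
    Mirror_p psi gam U c0 s1 s2 t1 t2 s t sig tau x k ->
    ~ Sigma_p psi gam U c0 s1 s2 t1 t2 s t sig tau x k ->
    exists2 e : R, 0 < e &
      forall x' k' : 'rV[R]_2,
        Mirror_p psi gam U c0 s1 s2 t1 t2 s t sig tau x' k' ->
        ~ Sigma_p psi gam U c0 s1 s2 t1 t2 s t sig tau x' k' ->
        `|x' - x| < e -> `|k' - k| < e -> x' = x /\ k' = k.
Proof.
move=> s t sig tau [[s_in _] _] x k [[Xx k_neq0] Lxk] not_Sigma.
have tau_neq0 := Lambda'_tau_neq0 Lxk k_neq0.
have Ux : U x := Xx.1.
have dpsi : differentiable psi x by case: (hpsi_smooth 1%N) => + _; apply.
have Rv_gt0 : 0 < enorm (Rv psi gam x s).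
  by case: hdist => d d_gt0 /(_ x s Ux s_in); apply: lt_le_trans.
have not_par : ~ parallel2 (piTR psi gam x s) (gradRg psi gam x s).
  by move=> par; apply: not_Sigma; split; [split|left; split].
have [e e_gt0 isolated] := isolated_in_level_set (differentiable_range_sq gam s dpsi)
  (differentiable_doppler dpsi Rv_gt0) (jac_det_range_doppler_neq0 dpsi Rv_gt0 not_par).
exists e => // x' k' [_ Lxk'] _ x'_near _.
have [range_eq doppler_eq] := Lambda'_level_set (lt0r_neq0 hc0) tau_neq0 Lxk Lxk'.
have x'_eq := isolated x' x'_near range_eq doppler_eq; subst x'.
by split; last exact: Lambda'_covector_unique Lxk'.
Qed.
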